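(* Let $p$ be a prime, $d\ge1$, $g\in L^2(\mathbb{Z}_p^d)$ with $\|g\|_2=1$, and $A,B\subseteq\mathbb{Z}_p^d$. Let $E=\operatorname{supp}(g)$ and assume $g(x)$ is a positive real number for every $x\in E$ (so $g\ge 0$ everywhere). Then the Gabor system $\mathcal{G}(g,A,B)$ is an orthonormal basis of $L^2(\mathbb{Z}_p^d)$ if and only if all of the following hold: (i) $g=|E|^{-1/2}1_E$; (ii) $(E,B)$ is a spectral pair; (iii) $(E,A)$ is a tiling pair.
   Context: $\mathbb{Z}_p$ is the field of integers mod a prime $p$, $\mathbb{Z}_p^d$ the $d$-dimensional vector space over it, and $x\cdot b=\sum_i x_ib_i$. $\chi(t)=e^{2\pi i t/p}$ for $t\in\mathbb{Z}_p$. $L^2(\mathbb{Z}_p^d)$ is the space of functions $\mathbb{Z}_p^d\to\mathbb{C}$ with inner product $\langle f,h\rangle=\sum_{x\in\mathbb{Z}_p^d} f(x)\overline{h(x)}$ (counting measure). For $g\in L^2(\mathbb{Z}_p^d)$ and $A,B\subseteq\mathbb{Z}_p^d$, the Gabor system is $\mathcal{G}(g,A,B)=\{x\mapsto g(x-a)\chi(x\cdot b)\}_{a\in A,\ b\in B}$. $\operatorname{supp}(g)=\{x:g(x)\ne0\}$; $1_E$ is the indicator of $E$. A pair $(E,B)$ is a spectral pair if the functions $\{x\mapsto\chi(x\cdot b)\}_{b\in B}$, restricted to $E$, form an orthogonal basis of $L^2(E)$. A pair $(E,A)$ is a tiling pair if $\sum_{a\in A}1_E(x-a)=1$ for all $x\in\mathbb{Z}_p^d$.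 *)

From HB Require Import structures.
From mathcomp Require Import all_boot all_order all_algebra all_field.
Set Implicit Arguments. Unset Strict Implicit. Unset Printing Implicit Defensive.
Import Order.TTheory GRing.Theory Num.Theory.
Local Open Scope ring_scope.

Notation vecZp p d := 'rV['F_p]_d.

Definition dotZp (p d : nat) (x b : vecZp p d) : 'F_p :=
  \sum_(i < d) x 0 i * b 0 i.

(* e^{2 pi i / p}: p.-root (-1) is e^{i pi / p} (minimal argument convention) *)
Definition omega (p : nat) : algC := (p.-root (-1)) ^+ 2.

(* chi(t) = e^{2 pi i t / p}, t represented by its value in {0,..,p-1} *)
Definition chi (p : nat) (t : 'F_p) : algC := omega p ^+ (nat_of_ord t).

Definition ip (p d : nat) (f h : vecZp p d -> algC) : algC :=
  \sum_(x : vecZp p d) f x * (h x)^*.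

Definition supp (p d : nat) (g : vecZp p d -> algC) : {set vecZp p d} :=
  [set x | g x != 0].

Definition gabor (p d : nat) (g : vecZp p d -> algC) (a b : vecZp p d)
  : vecZp p d -> algC :=
  fun x => g (x - a) * chi (dotZp x b).

Definition gabor_ONB (p d : nat) (g : vecZp p d -> algC)
  (A B : {set vecZp p d}) : Prop :=
  (forall a a' b b', a \in A -> a' \in A -> b \in B -> b' \in B ->
     ip (gabor g a b) (gabor g a' b')
       = if (a == a') && (b == b') then 1 else 0)
  /\ (forall f : vecZp p d -> algC, exists c : vecZp p d -> vecZp p d -> algC,
        forall x, f x = \sum_(a in A) \sum_(b in B) c a b * gabor g a b x).

Definition expo (p d : nat) (b : vecZp p d) : vecZp p d -> algC :=
  fun x => chi (dotZp x b).

Definition ipE (p d : nat) (E : {set vecZp p d}) (f h : vecZp p d -> algC) : algC :=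
  \sum_(x in E) f x * (h x)^*.

Definition spectral_pair (p d : nat) (E B : {set vecZp p d}) : Prop :=
  (forall b, b \in B -> ipE E (expo b) (expo b) != 0)
  /\ (forall b b', b \in B -> b' \in B -> b != b' -> ipE E (expo b) (expo b') = 0)
  /\ (forall f : vecZp p d -> algC, exists c : vecZp p d -> algC,
        forall x, x \in E -> f x = \sum_(b in B) c b * expo b x).

Definition tiling_pair (p d : nat) (E A : {set vecZp p d}) : Prop :=
  forall x : vecZp p d, \sum_(a in A) (nat_of_bool ((x - a)%R \in E)) = 1%N.

From HB Require Import structures.
From mathcomp Require Import all_boot all_order all_algebra all_field.
From mathcomp Require Import ring.
Set Implicit Arguments. Unset Strict Implicit. Unset Printing Implicit Defensive.
Import Order.TTheory GRing.Theory Num.Theory.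
Local Open Scope ring_scope.

(* Since g >= 0, orthogonality of the atoms at positions a != a' with a common
   frequency forces the translates E + a, a in A, to be pairwise disjoint, and
   expanding a point mass in the basis gives #|B| * sum_(a in A) g (x - a)^2 = 1
   for every x.  Hence the translates also cover, and g^2 = 1/#|B| on E: g is a
   normalized indicator and (E, A) tiles.  Conversely, for a normalized
   indicator, translating by a turns the atoms at position a into the
   exponentials on E (up to a unimodular factor and |E|^(-1/2)), so
   orthonormality and completeness of the Gabor system on each tile are exactly
   the spectrality of (E, B). *)

Section Characters.
Variables (p d : nat).
Hypothesis p_prime : prime p.

Lemma omega_expp : omega p ^+ p = 1.
Proof. by rewrite /omega -exprM mulnC exprM rootCK ?prime_gt0 // sqrrN expr1n. Qed.

(* ['F_p] is ['Z_(pdiv p)], which is ['Z_p] only because [p] is prime. *)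
Lemma chiD (s t : 'F_p) : chi (s + t) = chi s * chi t.
Proof.
have omega_p : omega p ^+ (Zp_trunc (pdiv p)).+2 = 1 by rewrite Fp_cast // omega_expp.
by rewrite /chi /= (expr_mod _ omega_p) exprD.
Qed.

Lemma chi_mul_conj (t : 'F_p) : chi t * (chi t)^* = 1.
Proof.
have norm_omega : `|omega p| = 1.
  by apply/eqP; rewrite -(pexpr_eq1 (prime_gt0 p_prime)) // -normrX omega_expp normr1.
by rewrite /chi -normCK normrX norm_omega !expr1n.
Qed.

Lemma chi_neq0 (t : 'F_p) : chi t != 0.
Proof. by apply: contra_eq_neq (chi_mul_conj t) => ->; rewrite mul0r eq_sym oner_neq0. Qed.

Lemma dotZpDl (x y b : 'rV['F_p]_d) : dotZp (x + y) b = dotZp x b + dotZp y b.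
Proof. by rewrite /dotZp -big_split; apply: eq_bigr => i _; rewrite mxE mulrDl. Qed.

Lemma chi_dot_sub (x a b : 'rV['F_p]_d) :
  chi (dotZp x b) = chi (dotZp (x - a) b) * chi (dotZp a b).
Proof. by rewrite -chiD -dotZpDl subrK. Qed.

End Characters.

Section Translates.
Variables (p d : nat) (E A : {set 'rV['F_p]_d}).

Definition disjoint_translates := forall a a' x, a \in A -> a' \in A ->
  x - a \in E -> x - a' \in E -> a = a'.

Definition covering_translates := forall x, exists2 a, a \in A & x - a \in E.

Lemma tiling_pairP :
  tiling_pair E A <-> disjoint_translates /\ covering_translates.
Proof.
split=> [tileEA | [disjEA covEA] x].
  split=> [a a' x aA a'A xaE xa'E | x].
    apply/eqP; apply: contraT => neq_aa'; have := tileEA x.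
    rewrite (bigD1 a) //= xaE (bigD1 a') /=; last by rewrite a'A eq_sym neq_aa'.
    by rewrite xa'E.
  apply/exists_inP; apply: contraT; rewrite negb_exists_in => /forall_inP noa.
  have := tileEA x; rewrite big1 // => a aA.
  by rewrite (negbTE (noa a aA)).
have [a0 a0A xa0E] := covEA x.
rewrite (bigD1 a0) //= xa0E big1 ?addn0 // => a /andP[aA neq_aa0].
by apply/eqP; rewrite eqb0; apply: contra neq_aa0 => xaE; rewrite (disjEA _ _ _ aA a0A xaE xa0E).
Qed.

Lemma disjoint_translates_notin a a0 x : disjoint_translates ->
  a \in A -> a0 \in A -> a != a0 -> x - a0 \in E -> x - a \notin E.
Proof.
by move=> disjEA aA a0A + xa0E; apply: contra => xaE; rewrite (disjEA _ _ _ aA a0A xaE xa0E).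
Qed.

End Translates.

Section OrthonormalExpansion.
Variables (p d : nat) (F : 'rV['F_p]_d -> 'rV['F_p]_d -> 'rV['F_p]_d -> algC).
Variables (A B : {set 'rV['F_p]_d}).
Hypothesis F_orthonormal : forall a a' b b', a \in A -> a' \in A -> b \in B -> b' \in B ->
  ip (F a b) (F a' b') = if (a == a') && (b == b') then 1 else 0.

Lemma orthonormal_coefE (f : 'rV['F_p]_d -> algC) c a' b' :
  (forall x, f x = \sum_(a in A) \sum_(b in B) c a b * F a b x) ->
  a' \in A -> b' \in B -> c a' b' = ip f (F a' b').
Proof.
move=> f_exp a'A b'B.
have -> : ip f (F a' b') =
    \sum_(a in A) \sum_(b in B) c a b * ip (F a b) (F a' b').
  rewrite {1}/ip (eq_bigr (fun x => \sum_(a in A) \sum_(b in B)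
      c a b * (F a b x * (F a' b' x)^* ))); last first.
    move=> x _; rewrite f_exp mulr_suml; apply: eq_bigr => a _.
    by rewrite mulr_suml; apply: eq_bigr => b _; rewrite mulrA.
  rewrite exchange_big /=; apply: eq_bigr => a _.
  by rewrite exchange_big /=; apply: eq_bigr => b _; rewrite mulr_sumr.
rewrite (bigD1 a') //= [X in _ + X]big1 => [|a /andP[aA neq_aa']]; last first.
  by apply: big1 => b bB; rewrite F_orthonormal // (negbTE neq_aa') mulr0.
rewrite addr0 (bigD1 b') //= [X in _ + X]big1 => [|b /andP[bB neq_bb']]; last first.
  by rewrite F_orthonormal // (negbTE neq_bb') andbF mulr0.
by rewrite F_orthonormal // !eqxx mulr1 addr0.
Qed.

Hypothesis F_spanning : forall f : 'rV['F_p]_d -> algC, exists c,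
  forall x, f x = \sum_(a in A) \sum_(b in B) c a b * F a b x.

(* Expand the point mass at [y]: its coefficients are [(F a b y)^*]. *)
Lemma orthonormal_sum_sqr y :
  \sum_(a in A) \sum_(b in B) F a b y * (F a b y)^* = 1.
Proof.
pose delta x : algC := if x == y then 1 else 0.
have [c delta_exp] := F_spanning delta.
have c_conj a b : a \in A -> b \in B -> c a b = (F a b y)^*.
  move=> aA bB; rewrite (orthonormal_coefE delta_exp) // /ip (bigD1 y) //= big1.
    by rewrite /delta eqxx mul1r addr0.
  by move=> x neq_xy; rewrite /delta (negbTE neq_xy) mul0r.
have := delta_exp y; rewrite /delta eqxx => ->; apply: eq_bigr => a aA.
by apply: eq_bigr => b bB; rewrite c_conj // mulrC.
Qed.

End OrthonormalExpansion.

Definition normalized_indicator (p d : nat) (g : 'rV['F_p]_d -> algC) : Prop :=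
  forall x, g x = if x \in supp g then (sqrtC (#|supp g|%:R))^-1 else 0.

Section Gabor.
Variables (p d : nat) (g : 'rV['F_p]_d -> algC).
Hypothesis p_prime : prime p.

Lemma supp_eq0 x : x \notin supp g -> g x = 0.
Proof. by rewrite inE negbK => /eqP. Qed.

Lemma gabor_eq0 a b x : x - a \notin supp g -> gabor g a b x = 0.
Proof. by move=> /supp_eq0 xa0; rewrite /gabor xa0 mul0r. Qed.

Lemma card_supp_neq0 : ip g g = 1 -> (#|supp g|%:R : algC) != 0.
Proof.
move=> ip_gg; rewrite pnatr_eq0 -lt0n card_gt0; apply/set0Pn.
apply/existsP; apply: contraT; rewrite negb_exists => /forallP g0.
move: ip_gg; rewrite /ip big1 => [/eqP|x _]; first by rewrite eq_sym oner_eq0.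
by rewrite supp_eq0 ?mul0r.
Qed.

Lemma ipE_expo_diag (E : {set 'rV['F_p]_d}) b : ipE E (expo b) (expo b) = #|E|%:R.
Proof.
by rewrite /ipE (eq_bigr (fun=> 1)) ?sumr_const // => x _; exact: (chi_mul_conj p_prime).
Qed.

Hypothesis g_ge0 : forall x, 0 <= g x.

Lemma gabor_mul_conj a b x : gabor g a b x * (gabor g a b x)^* = g (x - a) ^+ 2.
Proof.
by rewrite /gabor rmorphM /= (geC0_conj (g_ge0 _)) mulrACA (chi_mul_conj p_prime) mulr1 expr2.
Qed.

Lemma ip_gabor a b a' b' : ip (gabor g a b) (gabor g a' b') =
  \sum_x g (x - a) * g (x - a') * (chi (dotZp x b) * (chi (dotZp x b'))^*).
Proof.
by apply: eq_bigr => x _; rewrite /gabor rmorphM /= (geC0_conj (g_ge0 _)) mulrACA.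
Qed.

Lemma disjoint_translates_of_orthogonal (A : {set 'rV['F_p]_d}) b :
  (forall a a', a \in A -> a' \in A -> a != a' ->
     ip (gabor g a b) (gabor g a' b) = 0) ->
  disjoint_translates (supp g) A.
Proof.
move=> orth a a' x aA a'A xaE xa'E; apply/eqP; apply: contraT => neq_aa'.
have := orth a a' aA a'A neq_aa'; rewrite ip_gabor.
under eq_bigr do rewrite (chi_mul_conj p_prime) mulr1.
move/psumr_eq0P => /(_ (fun z _ => mulr_ge0 (g_ge0 _) (g_ge0 _)) x isT) /eqP.
by rewrite mulf_eq0; move: xaE xa'E; rewrite !inE => /negbTE -> /negbTE ->.
Qed.

Lemma ip_gabor_disjoint (A : {set 'rV['F_p]_d}) a a' b b' :
  disjoint_translates (supp g) A -> a \in A -> a' \in A -> a != a' ->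
  ip (gabor g a b) (gabor g a' b') = 0.
Proof.
move=> disjEA aA a'A neq_aa'; rewrite ip_gabor big1 // => x _.
have [xa'E|xa'NE] := boolP (x - a' \in supp g); last by rewrite (supp_eq0 xa'NE) mulr0 mul0r.
by rewrite (supp_eq0 (disjoint_translates_notin disjEA aA a'A neq_aa' xa'E)) !mul0r.
Qed.

Lemma ip_gabor_normalized a b b' : normalized_indicator g ->
  ip (gabor g a b) (gabor g a b') = (#|supp g|%:R)^-1 *
    (chi (dotZp a b) * (chi (dotZp a b'))^*) * ipE (supp g) (expo b) (expo b').
Proof.
move=> g_ind; rewrite ip_gabor (reindex_inj (addIr a)) /= /ipE [in RHS]big_mkcond.
rewrite mulr_sumr; apply: eq_bigr => y _ /=.
rewrite addrK (chi_dot_sub p_prime (y + a) a b) (chi_dot_sub p_prime (y + a) a b') addrK.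
rewrite g_ind /expo; case: ifP => _; last by rewrite !mul0r mulr0.
by rewrite -expr2 exprVn sqrtCK rmorphM /=; ring.
Qed.

End Gabor.

Section GaborONBNecessary.
Variables (p d : nat) (g : 'rV['F_p]_d -> algC) (A B : {set 'rV['F_p]_d}).
Hypothesis p_prime : prime p.
Hypothesis g_ge0 : forall x, 0 <= g x.
Hypothesis onb : gabor_ONB g A B.

Lemma gabor_onb_sum_sqr y : #|B|%:R * \sum_(a in A) g (y - a) ^+ 2 = 1.
Proof.
have [orth span] := onb; rewrite -[RHS](orthonormal_sum_sqr orth span y) mulr_sumr.
apply: eq_bigr => a _; rewrite mulr_natl -sumr_const.
by apply: eq_bigr => b _; rewrite gabor_mul_conj.
Qed.

Lemma gabor_onb_disjoint : disjoint_translates (supp g) A.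
Proof.
have [b0 b0B] : exists b0, b0 \in B.
  have [B0|[b0 b0B]] := set_0Vmem B; last by exists b0.
  by have := gabor_onb_sum_sqr 0; rewrite B0 cards0 mul0r => /eqP; rewrite eq_sym oner_eq0.
apply: (disjoint_translates_of_orthogonal p_prime g_ge0 (b := b0)) => a a' aA a'A neq_aa'.
by have [orth _] := onb; rewrite orth // (negbTE neq_aa').
Qed.

Lemma gabor_onb_covering : covering_translates (supp g) A.
Proof.
move=> x; apply/exists_inP; apply: contraT; rewrite negb_exists_in => /forall_inP noa.
have := gabor_onb_sum_sqr x; rewrite big1 ?mulr0 => [/eqP|a aA].
  by rewrite eq_sym oner_eq0.
by rewrite supp_eq0 ?noa // expr2 mul0r.
Qed.

Lemma gabor_onb_tiling : tiling_pair (supp g) A.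
Proof. by apply/tiling_pairP; split; [apply: gabor_onb_disjoint | apply: gabor_onb_covering]. Qed.

Lemma gabor_onb_card_mul_sqr x : x \in supp g -> #|B|%:R * g x ^+ 2 = 1.
Proof.
move=> xE; have [a0 a0A _] := gabor_onb_covering 0.
have xa0E : x + a0 - a0 \in supp g by rewrite addrK.
have := gabor_onb_sum_sqr (x + a0); rewrite (bigD1 a0) //= addrK [X in _ + X]big1 ?addr0 //.
move=> a /andP[aA neq_aa0].
by rewrite supp_eq0 ?expr2 ?mul0r // (disjoint_translates_notin gabor_onb_disjoint aA a0A neq_aa0 xa0E).
Qed.

Hypothesis g_unit : ip g g = 1.

Lemma gabor_onb_card_supp : #|supp g| = #|B|.
Proof.
have : (#|B|%:R : algC) * ip g g = #|supp g|%:R.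
  rewrite /ip mulr_sumr (bigID (mem (supp g))) /= [X in _ + X]big1 => [|x /supp_eq0 ->].
    rewrite addr0 (eq_bigr (fun=> 1)) ?sumr_const // => x xE.
    by rewrite (geC0_conj (g_ge0 _)) -expr2 gabor_onb_card_mul_sqr.
  by rewrite mul0r mulr0.
by rewrite g_unit mulr1 => /eqP; rewrite eqr_nat eq_sym => /eqP.
Qed.

Lemma gabor_onb_normalized : normalized_indicator g.
Proof.
move=> x; case: ifP => [xE|/negbT/supp_eq0 //].
have card_neq0 := card_supp_neq0 g_unit.
apply/eqP; rewrite -(@eqrXn2 _ 2) ?g_ge0 ?invr_ge0 ?sqrtC_ge0 ?ler0n //.
rewrite exprVn sqrtCK -(inj_eq (mulfI card_neq0)) mulfV // gabor_onb_card_supp.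
by rewrite gabor_onb_card_mul_sqr.
Qed.

Lemma gabor_onb_spectral : spectral_pair (supp g) B.
Proof.
have card_neq0 := card_supp_neq0 g_unit.
have [a0 a0A _] := gabor_onb_covering 0.
have [orth span] := onb.
split; [|split].
- by move=> b _; rewrite ipE_expo_diag.
- move=> b b' bB b'B neq_bb'.
  have := orth a0 a0 b b' a0A a0A bB b'B; rewrite (negbTE neq_bb') andbF.
  rewrite (ip_gabor_normalized p_prime g_ge0 _ _ _ gabor_onb_normalized) => /eqP.
  by rewrite !mulf_eq0 invr_eq0 (negbTE card_neq0) conjC_eq0 !(negbTE (chi_neq0 p_prime _)) => /eqP.
- move=> f; have [c f_exp] := span (fun x => f (x - a0)).
  exists (fun b => c a0 b * (sqrtC #|supp g|%:R)^-1 * chi (dotZp a0 b)) => x xE.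
  have xa0E : x + a0 - a0 \in supp g by rewrite addrK.
  have := f_exp (x + a0); rewrite addrK => ->.
  rewrite (bigD1 a0) //= [X in _ + X]big1 ?addr0 => [|a /andP[aA neq_aa0]]; last first.
    apply: big1 => b _.
    rewrite gabor_eq0 ?mulr0 //.
    exact: (disjoint_translates_notin gabor_onb_disjoint aA a0A neq_aa0 xa0E).
  apply: eq_bigr => b _.
  rewrite /gabor addrK gabor_onb_normalized xE /expo (chi_dot_sub p_prime (x + a0) a0 b) addrK.
  by ring.
Qed.

End GaborONBNecessary.

Section GaborONBSufficient.
Variables (p d : nat) (g : 'rV['F_p]_d -> algC) (A B : {set 'rV['F_p]_d}).
Hypothesis p_prime : prime p.
Hypothesis g_ge0 : forall x, 0 <= g x.
Hypothesis supp_neq0 : (#|supp g|%:R : algC) != 0.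
Hypotheses (g_ind : normalized_indicator g) (spec : spectral_pair (supp g) B).
Hypothesis tile : tiling_pair (supp g) A.

Lemma gabor_orthonormal a a' b b' : a \in A -> a' \in A -> b \in B -> b' \in B ->
  ip (gabor g a b) (gabor g a' b') = if (a == a') && (b == b') then 1 else 0.
Proof.
move=> aA a'A bB b'B; have [disjEA _] := proj1 (tiling_pairP _ _) tile.
have [_ [orthB _]] := spec.
have [<-|neq_aa'] /= := eqVneq a a'; last by rewrite (ip_gabor_disjoint g_ge0 b b' disjEA).
rewrite (ip_gabor_normalized p_prime g_ge0 _ _ _ g_ind).
have [<-|neq_bb'] := eqVneq b b'; last by rewrite orthB // mulr0.
by rewrite (chi_mul_conj p_prime) mulr1 ipE_expo_diag // mulVf.
Qed.

Lemma gabor_spanning (f : 'rV['F_p]_d -> algC) : exists c,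
  forall x, f x = \sum_(a in A) \sum_(b in B) c a b * gabor g a b x.
Proof.
have [disjEA covEA] := proj1 (tiling_pairP _ _) tile.
have [_ [_ spanB]] := spec.
have [C C_exp] : exists C : 'rV['F_p]_d -> 'rV['F_p]_d -> algC, forall a y,
    y \in supp g -> f (y + a) = \sum_(b in B) C a b * expo b y.
  apply: (@fin_all_exists _ (fun=> 'rV['F_p]_d -> algC)
    (fun a C => forall y, y \in supp g -> f (y + a) = \sum_(b in B) C b * expo b y)).
  by move=> a; apply: spanB.
exists (fun a b => C a b * sqrtC #|supp g|%:R * (chi (dotZp a b))^*) => x.
have [a0 a0A xa0E] := covEA x.
rewrite -{1}(subrK a0 x) (C_exp a0 _ xa0E).
rewrite [RHS](bigD1 a0) //= [X in _ = _ + X]big1 ?addr0 => [|a /andP[aA neq_aa0]]; last first.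
  apply: big1 => b _.
  by rewrite gabor_eq0 ?mulr0 // (disjoint_translates_notin disjEA aA a0A neq_aa0 xa0E).
apply: eq_bigr => b _.
have sqrt_neq0 : sqrtC (#|supp g|%:R : algC) != 0 by rewrite sqrtC_eq0.
rewrite /gabor g_ind xa0E /expo (chi_dot_sub p_prime x a0 b).
transitivity (C a0 b * chi (dotZp (x - a0) b)
    * (sqrtC (#|supp g|%:R : algC) / sqrtC #|supp g|%:R)
    * (chi (dotZp a0 b) * (chi (dotZp a0 b))^* )).
  by rewrite mulfV // (chi_mul_conj p_prime) !mulr1.
by ring.
Qed.

Lemma gabor_onb_of_tiling_spectral : gabor_ONB g A B.
Proof. by split; [apply: gabor_orthonormal | apply: gabor_spanning]. Qed.

End GaborONBSufficient.

Theorem theorem1p4 (p d : nat) (g : 'rV['F_p]_d -> algC)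
  (A B : {set 'rV['F_p]_d}) :
  prime p -> (0 < d)%N ->
  ip g g = 1 ->
  (forall x, x \in supp g -> 0 < g x) ->
  gabor_ONB g A B <->
  [/\ (forall x, g x = if x \in supp g then (sqrtC (#|supp g|%:R))^-1 else 0),
      spectral_pair (supp g) B
    & tiling_pair (supp g) A].
Proof.
move=> p_prime _ g_unit g_pos.
have g_ge0 x : 0 <= g x.
  by have [/g_pos/ltW|/supp_eq0 ->] := boolP (x \in supp g).
split=> [onb | [g_ind spec tile]].
  split; [exact: gabor_onb_normalized p_prime g_ge0 onb g_unit
         | exact: gabor_onb_spectral p_prime g_ge0 onb g_unit
         | exact: gabor_onb_tiling p_prime g_ge0 onb].
exact: gabor_onb_of_tiling_spectral p_prime g_ge0 (card_supp_neq0 g_unit) g_ind spec tile.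
Qed.
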